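(* Let $k\ge2$ and $T_1=\sum_{j=1}^{k-1}(16(k-j)-4)$. Let $e_0=v_1^1v_1^2v_1^3$ and, for $i\in[1,T_1]$, let $s\in[1,k-1]$ be the unique integer with $\sum_{j=1}^{s-1}(16(k-j)-4)<i\le\sum_{j=1}^{s}(16(k-j)-4)$, set $\alpha=i-\sum_{j=1}^{s-1}(16(k-j)-4)\in[1,16(k-s)-4]$, and define - $e_i=v_{2s-1}^1v_{2s-1+\alpha}^2v_1^3$ if $\alpha\in[1,4(k-s)]$; - $e_i=v_{6s-4k-1+\alpha}^1v_{4k-2s-1}^2v_1^3$ if $\alpha\in[4(k-s)+1,8(k-s)]$; - $e_i=v_{4k-2s-1}^1v_{12k-10s-1-\alpha}^2v_1^3$ if $\alpha\in[8(k-s)+1,12(k-s)-2]$; - $e_i=v_{16k-14s-3-\alpha}^1v_{2s+1}^2v_1^3$ if $\alpha\in[12(k-s)-1,16(k-s)-4]$. Then the $3$-graph $H_1=\mathcal{E}\cup\mathcal{F}\cup\{e_0\}$, with vertex set $A_1\cup A_2\cup\{v_1^3\}$, is $(e_i)_{i=0}^{T_1}$-sequential.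
   Context: Let $A_1=\{v^1_1,\dots,v^1_{4k-3}\}$, $A_2=\{v^2_1,\dots,v^2_{4k-3}\}$ be disjoint sets and $v_1^3$ a further vertex. Writing $xyz$ for $\{x,y,z\}$, for $i\in[1,k-1]$ let $\mathcal{E}_{1,i}=\{v_{2i-1}^1v_j^2v_{j+1}^2 : j\in[2i-1,4k-2-2i]\}$, $\mathcal{E}_{2,i}=\{v_j^1v_{j+1}^1v_{4k-1-2i}^2 : j\in[2i-1,4k-2-2i]\}$, $\mathcal{E}_{3,i}=\{v_{4k-1-2i}^1v_j^2v_{j+1}^2 : j\in[2i+1,4k-2-2i]\}$, $\mathcal{E}_{4,i}=\{v_j^1v_{j+1}^1v_{2i+1}^2 : j\in[2i+1,4k-2-2i]\}$, and $\mathcal{E}=\bigcup_{i=1}^{k-1}(\mathcal{E}_{1,i}\cup\mathcal{E}_{2,i}\cup\mathcal{E}_{3,i}\cup\mathcal{E}_{4,i})$. Let $\mathcal{F}=\{v_j^lv_{j+1}^lv_1^3 : j\in[1,4k-4],\ l\in\{1,2\}\}$. The $F_3$-bootstrap process ($F_3=K^3_4$) in the complete $3$-graph on a vertex set $V$ started from $G_0$: $G_i=G_{i-1}\cup\{e : e\notin G_{i-1} \text{ a } 3\text{-subset of } V,\ \exists\, w\in V\setminus e \text{ with the other three } 3\text{-subsets of } e\cup\{w\} \text{ in } G_{i-1}\}$; sets in $G_i\setminus G_{i-1}$ are infected at step $i$; $G_0$ is stationary if $G_1=G_0$. Definition: a $3$-graph $H$ on vertex set $V$ is $(e_i)_{i=0}^T$-sequential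 (for $3$-subsets $e_i$ of $V$ with $e_0\in H$) if (i) the process started from $H$ becomes stationary after $T$ steps and infects only $e_i$ at step $i$ for each $i\in[1,T]$; (ii) $H\setminus\{e_0\}$ is stationary; (iii) the process started from $(H\cup\{e_T\})\setminus\{e_0\}$ infects only $e_{T-i}$ at step $i$ for each $i\in[1,T]$. *)

From mathcomp Require Import all_boot.
Set Implicit Arguments. Unset Strict Implicit. Unset Printing Implicit Defensive.

Section Bootstrap.
Variable T : finType.

Definition boot_step (V : {set T}) (G : {set {set T}}) : {set {set T}} :=
  G :|: [set e in powerset V | [&& #|e| == 3, e \notin G &
          [exists w in V :\: e,
             [forall f in powerset (w |: e), ((#|f| == 3) && (f != e)) ==> (f \in G)]]]].

Definition boot_iter (V : {set T}) (G0 : {set {set T}}) (i : nat) : {set {set T}} :=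
  iter i (boot_step V) G0.

Definition infected (V : {set T}) (G0 : {set {set T}}) (i : nat) : {set {set T}} :=
  boot_iter V G0 i :\: boot_iter V G0 i.-1.

Definition stationary (V : {set T}) (G : {set {set T}}) : Prop :=
  boot_step V G = G.

Definition sequential (V : {set T}) (H : {set {set T}}) (e : nat -> {set T})
    (Tm : nat) : Prop :=
  [/\ (forall i, i <= Tm -> e i \subset V /\ #|e i| = 3),
      e 0 \in H,
      stationary V (boot_iter V H Tm) /\
      (forall i, 1 <= i <= Tm -> infected V H i = [set e i]),
      stationary V (H :\ e 0) &
      (forall i, 1 <= i <= Tm ->
         infected V ((e Tm |: H) :\ e 0) i = [set e (Tm - i)])].
End Bootstrap.

(* vertices v^l_j (l in {1,2,3}, 1 <= j <= 4k-3) live in 'I_4 * 'I_(4k+1) *)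
Definition vtx (k : nat) : finType := ('I_4 * 'I_(4 * k).+1)%type.
Definition v (k l j : nat) : vtx k := (inord l, inord j).

Definition edge3 (k : nat) (x y z : vtx k) : {set vtx k} := [set x; y; z].

Definition itv (a b : nat) : seq nat := index_iota a b.+1.

Definition A (k l : nat) : {set vtx k} := [set:: [seq v k l j | j <- itv 1 (4 * k - 3)]].
Definition Vset (k : nat) : {set vtx k} := A k 1 :|: A k 2 :|: [set v k 3 1].

Definition E1 k i : {set {set vtx k}} :=
  [set:: [seq edge3 (v k 1 (2*i-1)) (v k 2 j) (v k 2 j.+1) | j <- itv (2*i-1) (4*k-2-2*i)]].
Definition E2 k i : {set {set vtx k}} :=
  [set:: [seq edge3 (v k 1 j) (v k 1 j.+1) (v k 2 (4*k-1-2*i)) | j <- itv (2*i-1) (4*k-2-2*i)]].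
Definition E3 k i : {set {set vtx k}} :=
  [set:: [seq edge3 (v k 1 (4*k-1-2*i)) (v k 2 j) (v k 2 j.+1) | j <- itv (2*i+1) (4*k-2-2*i)]].
Definition E4 k i : {set {set vtx k}} :=
  [set:: [seq edge3 (v k 1 j) (v k 1 j.+1) (v k 2 (2*i+1)) | j <- itv (2*i+1) (4*k-2-2*i)]].

Definition Ecal k : {set {set vtx k}} :=
  \bigcup_(1 <= i < k) (E1 k i :|: E2 k i :|: E3 k i :|: E4 k i).

Definition Fcal k : {set {set vtx k}} :=
  \bigcup_(l <- [:: 1; 2])
    [set:: [seq edge3 (v k l j) (v k l j.+1) (v k 3 1) | j <- itv 1 (4*k-4)]].

Definition e0 k : {set vtx k} := edge3 (v k 1 1) (v k 2 1) (v k 3 1).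

Definition H1 k : {set {set vtx k}} := Ecal k :|: Fcal k :|: [set e0 k].

Definition psum (k s : nat) : nat := \sum_(1 <= j < s.+1) (16 * (k - j) - 4).

Definition T1 (k : nat) : nat := psum k k.-1.

(* the unique s in [1,k-1] with psum (s-1) < i <= psum s (for 1 <= i <= T1) *)
Definition sidx (k i : nat) : nat := (find (fun s => i <= psum k s) (itv 1 k.-1)).+1.

Definition eseq (k i : nat) : {set vtx k} :=
  if i == 0 then e0 k else
  let s := sidx k i in
  let a := i - psum k s.-1 in
  if a <= 4 * (k - s) then edge3 (v k 1 (2*s-1)) (v k 2 (2*s-1+a)) (v k 3 1)
  else if a <= 8 * (k - s) then
    edge3 (v k 1 (6*s + a - 4*k - 1)) (v k 2 (4*k-2*s-1)) (v k 3 1)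
  else if a <= 12 * (k - s) - 2 then
    edge3 (v k 1 (4*k-2*s-1)) (v k 2 (12*k - 10*s - 1 - a)) (v k 3 1)
  else edge3 (v k 1 (16*k - 14*s - 3 - a)) (v k 2 (2*s+1)) (v k 3 1).

From mathcomp Require Import all_boot zify.
Set Implicit Arguments. Unset Strict Implicit. Unset Printing Implicit Defensive.

(* Identify the pair (v^1_x, v^2_y) with the grid point (x, y).  Then e_i = v^1_x v^2_y v^3_1
   is the i-th point p_i of a square spiral in [1, 4k-3]^2 winding inwards from (1, 1), E
   consists of the triples {v^1_x, v^1_x', v^2_y, v^2_y'} of the steps p_i p_(i+1) of the
   spiral, and F joins consecutive vertices of A_1, and of A_2, to the apex v^3_1.  The
   spiral is an induced path: two of its points are grid neighbours only if they are
   consecutive on it.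
   Let I be an interval and G = E + F + {e_m : m in I}.  If w completes a triple e to a
   copy of K^3_4 in G, any two vertices of e + w in a common layer have consecutive
   indices.  Hence no layer holds three of them; an apex-free e would be a step of the
   spiral, hence in E, or would make the spiral contain the four corners of a unit
   square; so e = e_m, and w lies on a step from p_m to some p_m' with m' in I.
   Conversely each such e_m is completed by that w.  So every step infects exactly the
   e_m next to the current interval, which therefore grows by one at each end. *)

Lemma setU1D (T : finType) (x : T) (A : {set T}) : x \notin A -> (x |: A) :\: A = [set x].
Proof.
move=> xA; apply/setP => t; rewrite !inE.
by case: (eqVneq t x) => [->|tx]; [rewrite xA | case: (t \in A)].
Qed.

Lemma bigcup_seqP (T : finType) (I : eqType) (r : seq I) (F : I -> {set T}) x :
  reflect (exists2 i, i \in r & x \in F i) (x \in \big[@setU T/set0]_(i <- r) F i).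
Proof.
elim: r => [|i r IH]; first by rewrite big_nil inE; right => -[].
rewrite big_cons in_setU; apply: (iffP orP) => [[xi|/IH[j jr xj]]|[j]].
- by exists i; rewrite ?mem_head.
- by exists j; rewrite // in_cons jr orbT.
by rewrite in_cons => /orP[/eqP-> xj|jr xj]; [left | right; apply/IH; exists j].
Qed.

Lemma find_iota (P : pred nat) m n t : t < n -> (forall j, j < n -> P (m + j) = (t <= j)) ->
  find P (iota m n) = t.
Proof.
elim: t m n => [|t IH] m [|n] //= t_lt HP; first by rewrite -[m]addn0 HP.
rewrite -[m]addn0 HP // addn0 IH // => j j_lt.
by rewrite addSnnS HP.
Qed.

Section Bootstrap.
Variable T : finType.
Implicit Types (V e f : {set T}) (G B : {set {set T}}) (w x y z : T).

Lemma set3P x y z t : reflect [\/ t = x, t = y | t = z] (t \in [set x; y; z]).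
Proof.
apply: (iffP idP) => [|[] ->]; rewrite !inE ?eqxx ?orbT //.
by rewrite -orbA => /or3P[] /eqP ?; [constructor 1 | constructor 2 | constructor 3].
Qed.

Lemma set31 x y z : x \in [set x; y; z]. Proof. exact/set3P/Or31. Qed.
Lemma set32 x y z : y \in [set x; y; z]. Proof. exact/set3P/Or32. Qed.
Lemma set33 x y z : z \in [set x; y; z]. Proof. exact/set3P/Or33. Qed.

Lemma set3C12 x y z : [set x; y; z] = [set y; x; z].
Proof. by apply/setP => t; rewrite !inE; case: (t == x); case: (t == y). Qed.

Lemma set3C23 x y z : [set x; y; z] = [set x; z; y].
Proof. by apply/setP => t; rewrite !inE; case: (t == y); case: (t == z); rewrite ?orbT. Qed.

Lemma cards3 x y z : x != y -> x != z -> y != z -> #|[set x; y; z]| = 3.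
Proof.
move=> xy xz yz; rewrite -setUA cardsU1 cards2 yz !inE.
by rewrite (negbTE xy) (negbTE xz).
Qed.

Lemma sorted_triple (f : T -> nat) e : #|e| = 3 ->
  exists x y z, [/\ x != y, x != z, y != z, f x <= f y <= f z & e = [set x; y; z]].
Proof.
move=> e3; set s := sort (relpre f leq) (enum e).
have : size s = 3 by rewrite size_sort -cardE.
have : uniq s by rewrite sort_uniq enum_uniq.
have : sorted (relpre f leq) s by apply: sort_sorted => a b; apply: leq_total.
have es : e = [set:: s] by apply/setP => t; rewrite inE mem_sort mem_enum.
case: s es => [|x [|y [|z []]]] // -> /= /and3P[fxy fyz _].
rewrite !inE !negb_or -!andbA => /and4P[xy xz yz _] _; exists x, y, z.
by split=> //; [rewrite fxy | apply/setP => t; rewrite !inE orbA].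
Qed.

Lemma faces_through w x y z f :
  w \notin [set x; y; z] -> x != y -> x != z -> y != z ->
  f \subset w |: [set x; y; z] -> #|f| = 3 -> f != [set x; y; z] ->
  [\/ f = [set w; x; y], f = [set w; x; z] | f = [set w; y; z]].
Proof.
rewrite !inE !negb_or -andbA => /and3P[wx wy wz] xy xz yz fS fc fne.
have face t u s : t \notin f -> [set x; y; z] \subset [set t; u; s] -> u != s ->
    w != u -> w != s -> f = [set w; u; s].
  move=> tf eS us wu ws; apply/eqP; rewrite eqEcard fc cards3 // leqnn andbT.
  apply/subsetP => r rf; case/setU1P: (subsetP fS r rf) => [->|/(subsetP eS)]; first exact: set31.
  by case/set3P => E; [rewrite -E rf in tf | rewrite E set32 | rewrite E set33].
have perm u s t : [set x; y; z] \subset [set u; s; t] = [&& x \in [set u; s; t], y \in [set u; s; t]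
    & z \in [set u; s; t]].
  by apply/subsetP/and3P => [eS|[xS yS zS] r /set3P[] ->]; rewrite ?eS ?set31 ?set32 ?set33.
have [xf|xf] := boolP (x \in f); last first.
  by constructor 3; apply: face xf _ yz wy wz; rewrite perm !inE !eqxx !orbT.
have [yf|yf] := boolP (y \in f); last first.
  by constructor 2; apply: face yf _ xz wx wz; rewrite perm !inE !eqxx !orbT.
have [zf|zf] := boolP (z \in f); last first.
  by constructor 1; apply: face zf _ xy wx wy; rewrite perm !inE !eqxx !orbT.
case/negP: fne; rewrite eq_sym eqEcard fc cards3 // leqnn andbT.
by apply/subsetP => r /set3P[] ->.
Qed.

Lemma card_boot_step_new V G f : f \in boot_step V G :\: G -> #|f| = 3.
Proof. by rewrite in_setD in_setU => /andP[/negbTE-> /=]; rewrite inE => /andP[_ /and3P[/eqP]]. Qed.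

Lemma mem_boot_step_new V G x y z : x != y -> x != z -> y != z ->
  [set x; y; z] \in boot_step V G :\: G <->
  [/\ [set x; y; z] \subset V, [set x; y; z] \notin G &
      exists2 w, w \in V :\: [set x; y; z] &
        [/\ [set w; x; y] \in G, [set w; x; z] \in G & [set w; y; z] \in G]].
Proof.
move=> xy xz yz; set e := [set x; y; z].
rewrite in_setD in_setU; case eG: (e \in G) => /=; first by split=> // -[].
rewrite inE powersetE cards3 // eqxx eG /=.
have face w u s : w \notin e -> u \in e -> s \in e -> u != s ->
    [/\ [set w; u; s] \subset w |: e, #|[set w; u; s]| == 3 & [set w; u; s] != e].
  move=> we ue se us; have wu : w != u by apply: contraNneq we => ->.
  have ws : w != s by apply: contraNneq we => ->.
  split; last by apply: contraNneq we => <-; rewrite set31.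
    by apply/subsetP => r /set3P[] ->; rewrite in_setU1 ?eqxx ?ue ?se ?orbT.
  by rewrite cards3.
have [xe ye ze] : [/\ x \in e, y \in e & z \in e] by rewrite set31 set32 set33.
split.
- case/andP=> eV /exists_inP[w wVe /forall_inP Hf]; split=> //; exists w => //.
  have we : w \notin e by move: wVe; rewrite in_setD => /andP[].
  have inG u s : u \in e -> s \in e -> u != s -> [set w; u; s] \in G.
    move=> ue se us; have [fS fc fe] := face w u s we ue se us.
    by have := Hf [set w; u; s]; rewrite powersetE fS fc fe => /(_ isT).
  by split; apply: inG.
case=> eV _ [w wVe [Gxy Gxz Gyz]]; rewrite eV; apply/exists_inP; exists w => //.
have we : w \notin e by move: wVe; rewrite in_setD => /andP[].
apply/forall_inP => f; rewrite powersetE => fS; apply/implyP => /andP[/eqP fc fe].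
by case: (faces_through we xy xz yz fS fc fe) => ->.
Qed.

Lemma eq_sequential V G (e e' : nat -> {set T}) Tm :
  e =1 e' -> sequential V G e Tm -> sequential V G e' Tm.
Proof.
move=> ee' [e_in e0H [stat inf] stat0 inf_rev]; split; rewrite -?ee' //.
- by move=> i; rewrite -ee'; apply: e_in.
- by split=> // i i_in; rewrite -ee' inf.
by move=> i i_in; rewrite -!ee' inf_rev.
Qed.

Section Window.
Variables (V : {set T}) (B : {set {set T}}) (e : nat -> {set T}) (Tm : nat).

(* Both processes of [sequential] run through the graphs [window lo hi]. *)
Definition window lo hi := B :|: [set:: [seq e m | m <- itv lo hi]].

Lemma windowP lo hi f : f \in window lo hi <-> f \in B \/ exists2 m, lo <= m <= hi & f = e m.
Proof.
rewrite in_setU inE; split=> [/orP[]|[->|[m m_in ->]]]; [by left | | by [] |].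
  by case/mapP=> m; rewrite mem_index_iota ltnS; right; exists m.
by apply/orP; right; apply: map_f; rewrite mem_index_iota ltnS.
Qed.

Lemma window_consl lo hi : lo <= hi -> window lo hi = e lo |: window lo.+1 hi.
Proof.
move=> le_lo_hi; rewrite /window /itv /index_iota subSS.
by rewrite (subSn le_lo_hi) /= set_cons setUCA.
Qed.

Lemma window_rconsr lo hi : lo <= hi.+1 -> window lo hi.+1 = e hi.+1 |: window lo hi.
Proof.
move=> le_lo_hi; rewrite /window /itv /index_iota (subSn le_lo_hi) -addn1 iotaD.
rewrite subnKC // map_cat; apply/setP => f; rewrite !inE mem_cat inE.
by case: (f == e hi.+1); rewrite ?orbT ?orbF.
Qed.

Hypothesis e_notin_B : forall m, m <= Tm -> e m \notin B.
Hypothesis e_inj : forall m m', m <= Tm -> m' <= Tm -> e m = e m' -> m = m'.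
Hypothesis e_triple : forall m, m <= Tm -> e m \subset V /\ #|e m| = 3.
Hypothesis window_new : forall lo hi f, hi <= Tm ->
  f \in boot_step V (window lo hi) :\: window lo hi <->
  exists m m', [/\ m <= Tm, ~~ (lo <= m <= hi), lo <= m' <= hi, m' = m.+1 \/ m = m'.+1 & f = e m].

Lemma mem_e_window m lo hi : m <= Tm -> hi <= Tm -> (e m \in window lo hi) = (lo <= m <= hi).
Proof.
move=> mT hiT; rewrite /window in_setU (negbTE (e_notin_B mT)) /= inE /itv.
apply/mapP/idP => [[m' m'_in eq_m]|m_in]; last by exists m; rewrite ?mem_index_iota.
have m'T : m' <= Tm by move: m'_in; rewrite mem_index_iota; lia.
by move: m'_in; rewrite (e_inj mT m'T eq_m) mem_index_iota ltnS.
Qed.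

Lemma boot_step_window lo hi f : hi <= Tm -> f \in boot_step V (window lo hi) <->
  f \in window lo hi \/
  exists m m', [/\ m <= Tm, ~~ (lo <= m <= hi), lo <= m' <= hi, m' = m.+1 \/ m = m'.+1 & f = e m].
Proof.
move=> hiT; rewrite -window_new // in_setD /boot_step in_setU.
by case: (f \in window lo hi); split=> [|[]]; auto.
Qed.

Lemma base_stationary : boot_step V B = B.
Proof.
have B_eq : window 1 0 = B by rewrite /window /itv /index_iota /= set_nil setU0.
rewrite -B_eq; apply/setP => f; apply/idP/idP => [|fB].
  by case/(boot_step_window 1 f (leq0n Tm))=> // -[m [m' [_ _]]]; lia.
by apply/(boot_step_window 1 f (leq0n Tm)); left.
Qed.

Lemma window_grows lo hi :
  lo <= hi <= Tm -> boot_step V (window lo hi) = window lo.-1 (minn hi.+1 Tm).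
Proof.
move=> lo_hi; have hiT : hi <= Tm by case/andP: lo_hi.
apply/setP => f; apply/idP/idP.
  case/(boot_step_window lo f hiT) => [/windowP[fB|[m m_in ->]]|[m [m' [mT _ m'_in m_adj ->]]]];
    apply/windowP; [by left | right; exists m => //; lia | right; exists m => //; lia].
case/windowP => [fB|[m m_in ->]]; apply/(boot_step_window lo _ hiT).
  by left; apply/windowP; left.
have [m_in'|m_out] := boolP (lo <= m <= hi); first by left; apply/windowP; right; exists m.
right; exists m; have [m_lt|m_ge] := ltnP m lo; [exists lo | exists hi]; split=> //; lia.
Qed.

Lemma boot_iter_window lo hi i : lo <= hi <= Tm ->
  boot_iter V (window lo hi) i = window (lo - i) (minn (hi + i) Tm).
Proof.
move=> lo_hi; elim: i => [|i IH]; first by rewrite subn0 addn0 (minn_idPl _) //; lia.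
rewrite /boot_iter iterS -/(boot_iter _ _ _) IH window_grows; last lia.
by congr window; lia.
Qed.

Theorem window_sequential : sequential V (B :|: [set e 0]) e Tm.
Proof.
have B0 : B :|: [set e 0] = window 0 0.
  by rewrite /window /itv /index_iota /= set_cons set_nil setU0.
split=> //; first by rewrite !inE eqxx orbT.
- split=> [|i /andP[i_gt0 iT]].
    rewrite /stationary B0 boot_iter_window // window_grows; last lia.
    by congr window; lia.
  rewrite /infected B0 !boot_iter_window // !sub0n !add0n.
  rewrite !(minn_idPl _) ?(leq_trans (leq_pred i)) //.
  rewrite -[in window 0 i](prednK i_gt0) window_rconsr // prednK // setU1D //.
  by rewrite mem_e_window //; lia.
- by rewrite /stationary setUC setU1K ?e_notin_B //; apply: base_stationary.
move=> i /andP[i_gt0 iT].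
have T_gt0 : 0 < Tm by lia.
have -> : (e Tm |: (B :|: [set e 0])) :\ e 0 = window Tm Tm.
  rewrite /window /itv /index_iota subSn // subnn /= set_cons set_nil setU0.
  apply/setP => f; rewrite !inE; case: (eqVneq f (e 0)) => [->|_] /=.
    by rewrite (negbTE (e_notin_B _)) //; case: eqP => // /e_inj; lia.
  by case: (f == e Tm); rewrite ?orbT ?orbF.
rewrite /infected !boot_iter_window ?leqnn // !(minn_idPr _) ?leq_addr //.
have -> : Tm - i.-1 = (Tm - i).+1 by lia.
rewrite (window_consl (leq_subr _ _)) setU1D //.
by rewrite mem_e_window ?leq_subr //; lia.
Qed.
End Window.
End Bootstrap.

Definition grid_adj (P Q : nat * nat) : Prop :=
  P.1 = Q.1 /\ (Q.2 = P.2.+1 \/ P.2 = Q.2.+1) \/ P.2 = Q.2 /\ (Q.1 = P.1.+1 \/ P.1 = Q.1.+1).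

Lemma grid_adj_sym P Q : grid_adj P Q -> grid_adj Q P.
Proof. rewrite /grid_adj; lia. Qed.

Lemma no_adjacent_triangle a b c :
  b = a.+1 \/ a = b.+1 -> c = a.+1 \/ a = c.+1 -> c = b.+1 \/ b = c.+1 -> False.
Proof. lia. Qed.

Section Triples.
Variable k : nat.
Hypothesis k_gt0 : 0 < k.
Local Notation apex := (v k 3 1).

(* [v k l j] is the pair [(l, j)]; the apex is the only vertex of [Vset k] in layer 3. *)
Definition layer (t : vtx k) : nat := t.1.
Definition coord (t : vtx k) : nat := t.2.

Lemma vtxE t : t = v k (layer t) (coord t).
Proof. by rewrite /v !inord_val; case: t. Qed.

Lemma vtx_layerE t l : layer t = l -> t = v k l (coord t).
Proof. by move=> <-; exact: vtxE. Qed.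

Lemma layer_v l j : l < 4 -> layer (v k l j) = l.
Proof. exact: inordK. Qed.

Lemma coord_v l j : j <= 4 * k -> coord (v k l j) = j.
Proof. exact: inordK. Qed.

Lemma layer_apex : layer apex = 3.
Proof. exact: layer_v. Qed.

Lemma coord_apex : coord apex = 1.
Proof. by rewrite coord_v //; lia. Qed.

Lemma vtx_neq t t' : (t != t') = (layer t != layer t') || (coord t != coord t').
Proof. by case: t t' => [l j] [l' j']; rewrite -negb_and xpair_eqE. Qed.

Lemma vtx_eqE t t' : (t == t') = (layer t == layer t') && (coord t == coord t').
Proof. by rewrite -[LHS]negbK vtx_neq negb_or !negbK. Qed.

Lemma v_neq_layer l l' j j' : l < 4 -> l' < 4 -> l != l' -> v k l j != v k l' j'.
Proof. by move=> l4 l'4 ll'; rewrite vtx_neq !layer_v // ll'. Qed.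

Lemma in_Vset t : t \in Vset k ->
  (layer t = 1 \/ layer t = 2) /\ 0 < coord t <= 4 * k - 3 \/ layer t = 3 /\ coord t = 1.
Proof.
rewrite /Vset /A !inE -orbA; case/or3P => [/mapP[j]|/mapP[j]|/eqP->]; last first.
  by rewrite layer_apex coord_apex; right.
all: by rewrite mem_index_iota => j_in ->; rewrite layer_v // coord_v //; lia.
Qed.

Lemma v_in_Vset l j : l = 1 \/ l = 2 -> 0 < j <= 4 * k - 3 -> v k l j \in Vset k.
Proof.
move=> l12 j_in; rewrite /Vset /A !inE.
by case: l12 => ->; rewrite -orbA; apply/orP; [left | right; apply/orP; left];
  apply: map_f; rewrite mem_index_iota; lia.
Qed.

Lemma apex_in_Vset : apex \in Vset k.
Proof. by rewrite /Vset !inE eqxx orbT. Qed.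

(* The grid point [(x, y)] stands for the triple [v^1_x v^2_y v^3_1]; two neighbouring
   points [P], [Q] span the triple [edge_triple P Q] of the shape used in [Ecal]. *)
Definition point_triple (P : nat * nat) : {set vtx k} := edge3 (v k 1 P.1) (v k 2 P.2) apex.

Definition edge_triple (P Q : nat * nat) : {set vtx k} :=
  [set v k 1 P.1; v k 1 Q.1] :|: [set v k 2 P.2; v k 2 Q.2].

Lemma card_point_triple P : #|point_triple P| = 3.
Proof. by apply: cards3; apply: v_neq_layer. Qed.

Lemma edge_triple_sym P Q : edge_triple P Q = edge_triple Q P.
Proof. by rewrite /edge_triple [[set _; v k 1 _]]setUC [[set _; v k 2 _]]setUC. Qed.

Lemma edge_triple_vert P Q : P.1 = Q.1 -> edge_triple P Q = [set v k 1 P.1; v k 2 P.2; v k 2 Q.2].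
Proof. by move=> E; rewrite /edge_triple E setUid setUA. Qed.

Lemma edge_triple_horiz P Q : P.2 = Q.2 -> edge_triple P Q = [set v k 1 P.1; v k 1 Q.1; v k 2 P.2].
Proof. by move=> E; rewrite /edge_triple E setUid. Qed.

Definition in_box (P : nat * nat) := 0 < P.1 <= 4 * k - 3 /\ 0 < P.2 <= 4 * k - 3.

Lemma in_box_le P : in_box P -> P.1 <= 4 * k /\ P.2 <= 4 * k.
Proof. by case=> /andP[_ le1] /andP[_ le2]; split; apply: leq_trans (leq_subr 3 _). Qed.

Lemma mem_edge_triple t P Q : in_box P -> in_box Q -> t \in edge_triple P Q ->
  layer t = 1 /\ (coord t = P.1 \/ coord t = Q.1) \/
  layer t = 2 /\ (coord t = P.2 \/ coord t = Q.2).
Proof.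
move=> /in_box_le[P1 P2] /in_box_le[Q1 Q2].
by rewrite in_setU => /orP[] /set2P[] ->; rewrite layer_v // coord_v //; tauto.
Qed.

Lemma mem_point_triple t P : in_box P -> t \in point_triple P ->
  layer t = 1 /\ coord t = P.1 \/ layer t = 2 /\ coord t = P.2 \/ layer t = 3 /\ coord t = 1.
Proof.
move=> /in_box_le[P1 P2] /set3P[] ->; rewrite ?layer_apex ?coord_apex ?layer_v ?coord_v //; tauto.
Qed.

Lemma mem_F_triple t l j : l < 4 -> j < 4 * k -> t \in [set v k l j; v k l j.+1; apex] ->
  layer t = l /\ (coord t = j \/ coord t = j.+1) \/ layer t = 3 /\ coord t = 1.
Proof.
move=> l4 j_lt /set3P[] ->; rewrite ?layer_apex ?coord_apex ?layer_v ?coord_v //.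
all: first [tauto | lia].
Qed.
End Triples.

Section GridPath.
Variables (k : nat) (p : nat -> nat * nat) (Tm : nat).
Hypothesis p_range : forall m, m <= Tm -> in_box k (p m).
Hypothesis p_inj : forall m m', m <= Tm -> m' <= Tm -> p m = p m' -> m = m'.
Hypothesis p_induced :
  forall m m', m <= Tm -> m' <= Tm -> grid_adj (p m) (p m') <-> m' = m.+1 \/ m = m'.+1.

Local Notation apex := (v k 3 1).

Let k_gt0 : 0 < k. Proof. by case: (p_range (leq0n Tm)); lia. Qed.

Definition path_triples : {set {set vtx k}} :=
  [set:: [seq edge_triple k (p m) (p m.+1) | m <- iota 0 Tm]].

Local Notation B := (path_triples :|: Fcal k).
Local Notation W lo hi := (window B (fun m => point_triple k (p m)) lo hi).

Lemma point_triple_sub m : m <= Tm -> point_triple k (p m) \subset Vset k.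
Proof.
move=> /p_range[Pm1 Pm2]; apply/subsetP => t /set3P[] ->;
  by rewrite ?apex_in_Vset // v_in_Vset //; lia.
Qed.

Lemma no_path_square m1 m2 m3 m4 x1 x2 y1 y2 : m1 <= Tm -> m2 <= Tm -> m3 <= Tm -> m4 <= Tm ->
  p m1 = (x1, y1) -> p m2 = (x1, y2) -> p m3 = (x2, y1) -> p m4 = (x2, y2) ->
  x2 = x1.+1 \/ x1 = x2.+1 -> y2 = y1.+1 \/ y1 = y2.+1 -> False.
Proof.
move=> m1T m2T m3T m4T E1 E2 E3 E4 x12 y12.
have consec i j : i <= Tm -> j <= Tm -> grid_adj (p i) (p j) -> j = i.+1 \/ i = j.+1.
  by move=> iT jT /(p_induced iT jT).
have := consec _ _ m1T m2T; have := consec _ _ m1T m3T.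
have := consec _ _ m2T m4T; have := consec _ _ m3T m4T.
rewrite E1 E2 E3 E4 /grid_adj /= => c34 c24 c13 c12.
have n14 : m1 <> m4 by move=> E; move: E4; rewrite -E E1 => -[]; lia.
have n23 : m2 <> m3 by move=> E; move: E3; rewrite -E E2 => -[]; lia.
lia.
Qed.

Section Window.
Variables lo hi : nat.
Hypothesis hiT : hi <= Tm.

Lemma mem_path_window f : f \in W lo hi ->
  [\/ exists2 m, m < Tm & f = edge_triple k (p m) (p m.+1),
      exists l j, [/\ l = 1 \/ l = 2, 0 < j < 4 * k - 3 & f = [set v k l j; v k l j.+1; apex]]
    | exists2 m, lo <= m <= hi & f = point_triple k (p m)].
Proof.
case/windowP => [/setUP[]|[m m_in ->]]; last by constructor 3; exists m.
  by rewrite inE => /mapP[m]; rewrite mem_iota => m_lt ->; constructor 1; exists m.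
rewrite /Fcal !big_cons big_nil !inE orbF => /orP[] /mapP[j];
  rewrite mem_index_iota => j_in ->; constructor 2; [exists 1 | exists 2].
all: by exists j; split=> //; lia.
Qed.

Lemma edge_triple_in_window m : m < Tm -> edge_triple k (p m) (p m.+1) \in W lo hi.
Proof.
move=> m_lt; apply/windowP; left; rewrite in_setU inE.
by apply/orP; left; apply/mapP; exists m; rewrite ?mem_iota.
Qed.

Lemma F_triple_in_window l j :
  l = 1 \/ l = 2 -> 0 < j < 4 * k - 3 -> [set v k l j; v k l j.+1; apex] \in W lo hi.
Proof.
move=> l12 j_in; apply/windowP; left; apply/setUP; right.
rewrite /Fcal !big_cons big_nil !inE orbF.
case: l12 => ->; apply/orP; [left | right].
all: by apply/mapP; exists j => //; rewrite mem_index_iota; lia.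
Qed.

Lemma point_triple_in_window m : lo <= m <= hi -> point_triple k (p m) \in W lo hi.
Proof. by move=> m_in; apply/windowP; right; exists m. Qed.

Lemma adjacent_edge_in_window m m' : m <= Tm -> m' <= Tm -> grid_adj (p m) (p m') ->
  edge_triple k (p m) (p m') \in W lo hi.
Proof.
move=> mT m'T /(p_induced mT m'T)[] E; [|rewrite edge_triple_sym];
  by rewrite E; apply: edge_triple_in_window; lia.
Qed.

Lemma same_layer_adjacent f t t' : f \in W lo hi -> t \in f -> t' \in f -> t != t' ->
  layer t = layer t' -> coord t' = (coord t).+1 \/ coord t = (coord t').+1.
Proof.
move=> fW tf t'f; rewrite vtx_neq => /orP[/eqP//|/eqP ne] lt.
case/mem_path_window: fW tf t'f => [[m m_lt ->]|[l [j [l12 j_in ->]]]|[m m_in ->]].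
- have /(p_induced (ltnW m_lt) m_lt) : m.+1 = m.+1 \/ m = m.+2 by left.
  have mem_e := mem_edge_triple (p_range (ltnW m_lt)) (p_range m_lt).
  move=> adj /mem_e t_in /mem_e t'_in; move: adj ne lt t_in t'_in; rewrite /grid_adj; clear; lia.
- have [l_lt j_lt] : l < 4 /\ j < 4 * k by lia.
  move=> /(mem_F_triple k_gt0 l_lt j_lt) t_in /(mem_F_triple k_gt0 l_lt j_lt) t'_in.
  by move: ne lt l12 t_in t'_in; clear; lia.
- have mem_e := mem_point_triple k_gt0 (p_range (leq_trans (proj2 (andP m_in)) hiT)).
  by move=> /mem_e t_in /mem_e t'_in; move: ne lt t_in t'_in; clear; lia.
Qed.

Lemma cross_pair_on_path f t t' :
  f \in W lo hi -> t \in f -> t' \in f -> layer t = 1 -> layer t' = 2 ->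
  exists m, [/\ m <= Tm, p m = (coord t, coord t') & apex \in f -> lo <= m <= hi].
Proof.
case/mem_path_window => [[m m_lt ->]|[l [j [l12 j_in ->]]]|[m m_in ->]].
- have /(p_induced (ltnW m_lt) m_lt) adj : m.+1 = m.+1 \/ m = m.+2 by left.
  have mem_e := mem_edge_triple (p_range (ltnW m_lt)) (p_range m_lt).
  move=> /mem_e t_in /mem_e t'_in lt lt'.
  have apex_out : apex \notin edge_triple k (p m) (p m.+1).
    by apply/negP => /mem_e; rewrite layer_apex; lia.
  have [[Et Et']|[Et Et']] : coord t = (p m).1 /\ coord t' = (p m).2 \/
      coord t = (p m.+1).1 /\ coord t' = (p m.+1).2 by move: adj; rewrite /grid_adj; lia.
  + exists m; split; [exact: ltnW | | by rewrite (negbTE apex_out)].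
    by case: (p m) Et Et' => a b /= -> ->.
  + exists m.+1; split; [exact: m_lt | | by rewrite (negbTE apex_out)].
    by case: (p m.+1) Et Et' => a b /= -> ->.
- have [l_lt j_lt] : l < 4 /\ j < 4 * k by lia.
  by move=> /(mem_F_triple k_gt0 l_lt j_lt) t_in /(mem_F_triple k_gt0 l_lt j_lt) t'_in; lia.
- have mT : m <= Tm by case/andP: m_in => _ /leq_trans->.
  have mem_e := mem_point_triple k_gt0 (p_range mT).
  move=> /mem_e t_in /mem_e t'_in lt lt'.
  have [Et Et'] : coord t = (p m).1 /\ coord t' = (p m).2 by lia.
  by exists m; split=> //; case: (p m) Et Et' => a b /= -> ->.
Qed.

Lemma apex_pair_in_window s t :
  s \in Vset k -> t \in Vset k -> layer s = layer t -> layer s != 3 ->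
  coord t = (coord s).+1 \/ coord s = (coord t).+1 -> [set s; t; apex] \in W lo hi.
Proof.
move=> /(in_Vset k_gt0) Vs /(in_Vset k_gt0) Vt st s3 adj.
rewrite (vtxE s) (vtxE t) -st; case: adj => E; last rewrite set3C12.
all: by rewrite E; apply: F_triple_in_window; lia.
Qed.

Lemma apex_faces_in_window s t u : layer s = 1 -> layer u = 2 -> layer t = 1 \/ layer t = 2 ->
  s != t -> t != u -> [set apex; s; t] \in W lo hi -> [set apex; s; u] \in W lo hi ->
  [set apex; t; u] \in W lo hi -> [set s; t; u] \in W lo hi.
Proof.
move=> ls lu [lt|lt] st tu Fst Fsu Ftu.
- have [m [mT Em _]] := cross_pair_on_path Fsu (set32 _ _ _) (set33 _ _ _) ls lu.
  have [m' [m'T Em' _]] := cross_pair_on_path Ftu (set32 _ _ _) (set33 _ _ _) lt lu.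
  have adj := same_layer_adjacent Fst (set32 _ _ _) (set33 _ _ _) st (etrans ls (esym lt)).
  have := adjacent_edge_in_window mT m'T; rewrite Em Em' /grid_adj /edge_triple /= setUid.
  by rewrite -(vtx_layerE ls) -(vtx_layerE lt) -(vtx_layerE lu); apply; lia.
- have [m [mT Em _]] := cross_pair_on_path Fst (set32 _ _ _) (set33 _ _ _) ls lt.
  have [m' [m'T Em' _]] := cross_pair_on_path Fsu (set32 _ _ _) (set33 _ _ _) ls lu.
  have adj := same_layer_adjacent Ftu (set32 _ _ _) (set33 _ _ _) tu (etrans lt (esym lu)).
  have := adjacent_edge_in_window mT m'T; rewrite Em Em' /grid_adj /edge_triple /= setUid -setUA.
  by rewrite -(vtx_layerE ls) -(vtx_layerE lt) -(vtx_layerE lu); apply; lia.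
Qed.

Lemma apex_completion x y w : layer x = 1 -> layer y = 2 -> layer w = 1 \/ layer w = 2 ->
  w != x -> w != y -> [set x; y; apex] \notin W lo hi -> [set w; x; y] \in W lo hi ->
  [set w; x; apex] \in W lo hi -> [set w; y; apex] \in W lo hi ->
  exists m m', [/\ m <= Tm, ~~ (lo <= m <= hi), lo <= m' <= hi, m' = m.+1 \/ m = m'.+1
    & [set x; y; apex] = point_triple k (p m)].
Proof.
move=> lx ly lw wx wy eW Fwxy Fwx Fwy.
have [m [mT Em _]] := cross_pair_on_path Fwxy (set32 _ _ _) (set33 _ _ _) lx ly.
have eE : [set x; y; apex] = point_triple k (p m).
  by rewrite Em /point_triple /edge3 /= -(vtx_layerE lx) -(vtx_layerE ly).
suff [m' m'_in adj] : exists2 m', lo <= m' <= hi & grid_adj (p m) (p m').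
  exists m, m'; split=> //; last by apply/p_induced => //; lia.
  by apply: contra eW => m_in; rewrite eE point_triple_in_window.
case: lw => lw.
- have [m' [_ Em' /(_ (set33 _ _ _)) m'_in]] :=
    cross_pair_on_path Fwy (set31 _ _ _) (set32 _ _ _) lw ly.
  have := same_layer_adjacent Fwxy (set31 _ _ _) (set32 _ _ _) wx (etrans lw (esym lx)).
  by exists m' => //; rewrite Em Em' /grid_adj /=; lia.
- have [m' [_ Em' /(_ (set33 _ _ _)) m'_in]] :=
    cross_pair_on_path Fwx (set32 _ _ _) (set31 _ _ _) lx lw.
  have := same_layer_adjacent Fwxy (set31 _ _ _) (set33 _ _ _) wy (etrans lw (esym ly)).
  by exists m' => //; rewrite Em Em' /grid_adj /=; lia.
Qed.

Lemma no_apex_free_completion x y z w :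
  layer x = 1 -> 0 < layer y < 3 -> layer z = 2 -> w \in Vset k ->
  x != y -> x != z -> y != z -> w != x -> w != y -> w != z -> [set x; y; z] \notin W lo hi ->
  [set w; x; y] \in W lo hi -> [set w; x; z] \in W lo hi -> [set w; y; z] \in W lo hi -> False.
Proof.
move=> lx ly lz /(in_Vset k_gt0) Vw xy xz yz; rewrite ![w == _]eq_sym => wx wy wz eW Fxy Fxz Fyz.
have Axy := same_layer_adjacent Fxy (set32 _ _ _) (set33 _ _ _) xy.
have Ayz := same_layer_adjacent Fyz (set32 _ _ _) (set33 _ _ _) yz.
have Axw := same_layer_adjacent Fxy (set32 _ _ _) (set31 _ _ _) wx.
have Ayw := same_layer_adjacent Fxy (set33 _ _ _) (set31 _ _ _) wy.
have Azw := same_layer_adjacent Fxz (set33 _ _ _) (set31 _ _ _) wz.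
have ly12 : layer y = 1 \/ layer y = 2 by move: ly; clear; lia.
case: Vw => [[[lw|lw] _]|[w3 w1]].
- case: ly12 => ly1; last first.
    have [m1 [m1T E1 _]] := cross_pair_on_path Fxy (set32 _ _ _) (set33 _ _ _) lx ly1.
    have [m2 [m2T E2 _]] := cross_pair_on_path Fxz (set32 _ _ _) (set33 _ _ _) lx lz.
    have [m3 [m3T E3 _]] := cross_pair_on_path Fxy (set31 _ _ _) (set33 _ _ _) lw ly1.
    have [m4 [m4T E4 _]] := cross_pair_on_path Fxz (set31 _ _ _) (set33 _ _ _) lw lz.
    apply: (no_path_square m1T m2T m3T m4T E1 E2 E3 E4).
      exact: Axw (etrans lx (esym lw)).
    exact: Ayz (etrans ly1 (esym lz)).
  by apply: (no_adjacent_triangle (Axy _) (Axw _) (Ayw _)); congruence.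
- case: ly12 => ly1.
    have [m1 [m1T E1 _]] := cross_pair_on_path Fxz (set32 _ _ _) (set33 _ _ _) lx lz.
    have [m2 [m2T E2 _]] := cross_pair_on_path Fxy (set32 _ _ _) (set31 _ _ _) lx lw.
    have [m3 [m3T E3 _]] := cross_pair_on_path Fyz (set32 _ _ _) (set33 _ _ _) ly1 lz.
    have [m4 [m4T E4 _]] := cross_pair_on_path Fxy (set33 _ _ _) (set31 _ _ _) ly1 lw.
    apply: (no_path_square m1T m2T m3T m4T E1 E2 E3 E4).
      exact: Axy (etrans lx (esym ly1)).
    exact: Azw (etrans lz (esym lw)).
  by apply: (no_adjacent_triangle (Ayz _) (Ayw _) (Azw _)); congruence.
- have wE : w = apex by rewrite (vtxE w) w3 w1.
  by rewrite wE in Fxy Fxz Fyz; case/negP: eW; apply: apex_faces_in_window.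
Qed.

Lemma completion_sorted x y z w : layer x <= layer y <= layer z ->
  x != y -> x != z -> y != z -> [set x; y; z] \subset Vset k -> [set x; y; z] \notin W lo hi ->
  w \in Vset k :\: [set x; y; z] ->
  [set w; x; y] \in W lo hi -> [set w; x; z] \in W lo hi -> [set w; y; z] \in W lo hi ->
  exists m m', [/\ m <= Tm, ~~ (lo <= m <= hi), lo <= m' <= hi, m' = m.+1 \/ m = m'.+1
    & [set x; y; z] = point_triple k (p m)].
Proof.
move=> sorted xy xz yz /subsetP eV eW /setDP[wV wn] Fxy Fxz Fyz.
move: wn; rewrite !inE !negb_or -andbA => /and3P[wx wy wz].
have xV := eV x (set31 _ _ _); have yV := eV y (set32 _ _ _).
move: (in_Vset k_gt0 xV) (in_Vset k_gt0 yV) (in_Vset k_gt0 (eV z (set33 _ _ _))).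
move=> Vx Vy [[lz12 _]|[z3 z1]].
  have [lxz|[lx lz]] : layer x = layer z \/ layer x = 1 /\ layer z = 2.
    by move: Vx lz12 sorted; clear; lia.
    exfalso; apply: (no_adjacent_triangle (same_layer_adjacent Fxy (set32 _ _ _) (set33 _ _ _) xy _)
      (same_layer_adjacent Fxz (set32 _ _ _) (set33 _ _ _) xz _)
      (same_layer_adjacent Fyz (set32 _ _ _) (set33 _ _ _) yz _)); move: lxz sorted; clear; lia.
  case: (no_apex_free_completion lx _ lz wV xy xz yz wx wy wz eW Fxy Fxz Fyz).
  by move: Vy sorted lz; clear; lia.
have zE : z = apex by rewrite (vtxE z) z3 z1.
rewrite zE in eW Fxz Fyz xz yz wz *.
have not_apex t : t != apex -> t \in Vset k -> layer t = 1 \/ layer t = 2.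
  move=> ta /(in_Vset k_gt0)[[]//|[t3 t1]].
  by case/negP: ta; rewrite (vtxE t) t3 t1.
have [lx12 ly12] := conj (not_apex x xz xV) (not_apex y yz yV).
have [lxy|[lx ly]] : layer x = layer y \/ layer x = 1 /\ layer y = 2.
  by move: lx12 ly12 sorted; clear; lia.
  case/negP: eW; apply: apex_pair_in_window => //; first by case: lx12 => ->.
  exact: same_layer_adjacent Fxy (set32 _ _ _) (set33 _ _ _) xy lxy.
exact: apex_completion lx ly (not_apex w wz wV) wx wy eW Fxy Fxz Fyz.
Qed.

Lemma point_triple_new m m' : m <= Tm -> ~~ (lo <= m <= hi) -> lo <= m' <= hi ->
  m' = m.+1 \/ m = m'.+1 -> point_triple k (p m) \in boot_step (Vset k) (W lo hi) :\: W lo hi.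
Proof.
move=> mT m_out m'_in mm'; have m'T : m' <= Tm by lia.
have /(p_induced mT m'T) adj := mm'.
have [Pm1 Pm2] := p_range mT; have [Pm'1 Pm'2] := p_range m'T.
have in_V l j := @v_in_Vset k k_gt0 l j.
have F_in_W l j j' : l = 1 \/ l = 2 -> 0 < j <= 4 * k - 3 -> 0 < j' <= 4 * k - 3 ->
    j' = j.+1 \/ j = j'.+1 -> [set v k l j; v k l j'; apex] \in W lo hi.
  move=> l12 j_in j'_in jj'; apply: apex_pair_in_window; rewrite ?in_V ?layer_v ?coord_v //; lia.
rewrite {1}/point_triple /edge3; apply/mem_boot_step_new; rewrite ?v_neq_layer //; split.
- exact: point_triple_sub.
- apply/negP => fW.
  have [m'' [m''T Em'' /(_ (set33 _ _ _)) m''_in]] :=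
    cross_pair_on_path fW (set31 _ _ _) (set32 _ _ _) (@layer_v _ 1 _ isT) (@layer_v _ 2 _ isT).
  move: Em''; rewrite !coord_v -?surjective_pairing; try lia.
  by move/p_inj => /(_ m''T mT) E; rewrite -E m''_in in m_out.
case: (adj) => [[E1 adj2]|[E2 adj1]].
- exists (v k 2 (p m').2).
    rewrite in_setD in_V ?andbT; try lia.
    by rewrite !inE !vtx_eqE !layer_v ?layer_apex // !coord_v //; lia.
  split.
  + by rewrite set3C12 set3C23 -(edge_triple_vert _ E1); exact: adjacent_edge_in_window.
  + by rewrite set3C12 E1; apply: point_triple_in_window.
  + by apply: F_in_W; lia.
- exists (v k 1 (p m').1).
    rewrite in_setD in_V ?andbT; try lia.
    by rewrite !inE !vtx_eqE !layer_v ?layer_apex // !coord_v //; lia.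
  split.
  + by rewrite set3C12 -(edge_triple_horiz _ E2); exact: adjacent_edge_in_window.
  + by apply: F_in_W; lia.
  + by rewrite E2; apply: point_triple_in_window.
Qed.
End Window.

Lemma path_window_new lo hi (f : {set vtx k}) : hi <= Tm ->
  f \in boot_step (Vset k) (W lo hi) :\: W lo hi <->
  exists m m', [/\ m <= Tm, ~~ (lo <= m <= hi), lo <= m' <= hi, m' = m.+1 \/ m = m'.+1
    & f = point_triple k (p m)].
Proof.
move=> hiT; split; last first.
  by case=> m [m' [mT m_out m'_in mm' ->]]; exact (point_triple_new hiT mT m_out m'_in mm').
move=> f_new; have [x [y [z [xy xz yz sorted fE]]]] :=
  sorted_triple (@layer k) (card_boot_step_new f_new).
move: f_new; rewrite fE => /(mem_boot_step_new _ _ xy xz yz)[eV eW [w wV [Fxy Fxz Fyz]]].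
exact: completion_sorted sorted xy xz yz eV eW wV Fxy Fxz Fyz.
Qed.

Lemma point_triple_notin_B m : m <= Tm -> point_triple k (p m) \notin B.
Proof.
move=> mT; apply/negP => fB; have fW : point_triple k (p m) \in W 1 0 by apply/windowP; left.
have [m' [_ _ /(_ (set33 _ _ _))]] := cross_pair_on_path (leq0n Tm) fW (set31 _ _ _) (set32 _ _ _)
  (@layer_v _ 1 _ isT) (@layer_v _ 2 _ isT).
lia.
Qed.

Lemma point_triple_inj m m' : m <= Tm -> m' <= Tm ->
  point_triple k (p m) = point_triple k (p m') -> m = m'.
Proof.
move=> mT m'T E; apply: p_inj => //.
have mem := mem_point_triple k_gt0 (p_range m'T).
have /mem h1 : v k 1 (p m).1 \in point_triple k (p m') by rewrite -E set31.
have /mem h2 : v k 2 (p m).2 \in point_triple k (p m') by rewrite -E set32.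
have [P1 P2] := in_box_le (p_range mT).
move: h1 h2; rewrite !layer_v // !coord_v //.
by case: (p m) (p m') => a b [a' b'] /= h1 h2; congr (_, _); lia.
Qed.

Theorem path_sequential :
  sequential (Vset k) (B :|: [set point_triple k (p 0)]) (fun m => point_triple k (p m)) Tm.
Proof.
apply: window_sequential.
- exact: point_triple_notin_B.
- exact: point_triple_inj.
- by move=> m mT; rewrite card_point_triple point_triple_sub.
by move=> lo hi f hiT; exact (@path_window_new lo hi f hiT).
Qed.
End GridPath.

Section Spiral.
Variable k : nat.
Hypothesis k_ge2 : 2 <= k.

Definition ring_len s := 16 * (k - s) - 4.

(* The [a]-th point of the [s]-th ring of the spiral, with the case split of [eseq]. *)
Definition ring_pt s a : nat * nat :=
  if a <= 4 * (k - s) then (2 * s - 1, 2 * s - 1 + a)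
  else if a <= 8 * (k - s) then (6 * s + a - 4 * k - 1, 4 * k - 2 * s - 1)
  else if a <= 12 * (k - s) - 2 then (4 * k - 2 * s - 1, 12 * k - 10 * s - 1 - a)
  else (16 * k - 14 * s - 3 - a, 2 * s + 1).

(* The four sides of ring [s] (up, right, down, left) as closed ranges of [a], so that
   consecutive sides share their corner. *)
Definition on_ring s a (P : nat * nat) : Prop :=
  a + 4 * s <= 4 * k /\ P.1 + 1 = 2 * s /\ P.2 + 1 = 2 * s + a \/
  4 * k <= a + 4 * s /\ a + 8 * s <= 8 * k /\
    P.1 + 4 * k + 1 = 6 * s + a /\ P.2 + 2 * s + 1 = 4 * k \/
  8 * k <= a + 8 * s /\ a + 12 * s + 2 <= 12 * k /\
    P.1 + 2 * s + 1 = 4 * k /\ P.2 + 10 * s + 1 + a = 12 * k \/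
  12 * k <= a + 12 * s + 2 /\ a + 16 * s + 4 <= 16 * k /\
    P.1 + 14 * s + 3 + a = 16 * k /\ P.2 = 2 * s + 1.

Lemma ring_len_le s a : 1 <= s < k -> a <= ring_len s -> a + 16 * s + 4 <= 16 * k.
Proof. by rewrite /ring_len; lia. Qed.

Lemma ring_ptP s a : 1 <= s < k -> a <= ring_len s -> on_ring s a (ring_pt s a).
Proof.
rewrite /ring_len /ring_pt /on_ring => s_in a_le.
case: ifP => [|/negbT] h1 /=; first by left; lia.
case: ifP => [|/negbT] h2 /=; first by right; left; lia.
by case: ifP => [|/negbT] h3 /=; right; right; [left | right]; lia.
Qed.

Lemma ring_pt_box s a : 1 <= s < k -> a <= ring_len s -> in_box k (ring_pt s a).
Proof.
move=> s_in a_le; have := ring_ptP s_in a_le; have := ring_len_le s_in a_le.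
by rewrite /on_ring /in_box; lia.
Qed.

Lemma ring_pt_succ s a : 1 <= s < k -> a < ring_len s -> grid_adj (ring_pt s a) (ring_pt s a.+1).
Proof.
move=> s_in a_lt; have := ring_ptP s_in (ltnW a_lt); have := ring_ptP s_in a_lt.
by have := ring_len_le s_in a_lt; rewrite /on_ring /grid_adj; lia.
Qed.

Lemma ring_pt_last s : 1 <= s -> s.+1 < k -> ring_pt s (ring_len s) = ring_pt s.+1 0.
Proof.
move=> s_ge1 s_lt; have := ring_ptP (_ : 1 <= s < k) (leqnn (ring_len s)).
have := ring_ptP (_ : 1 <= s.+1 < k) (leq0n (ring_len s.+1)).
case: (ring_pt s _) (ring_pt s.+1 0) => x y [x' y']; rewrite /on_ring /ring_len /=.
by move=> /(_ ltac:(lia)) h' /(_ ltac:(lia)) h; congr (_, _); lia.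
Qed.

Lemma ring_pt_inj s a s' a' : 1 <= s < k -> 1 <= s' < k -> a <= ring_len s -> a' <= ring_len s' ->
  0 < a \/ s = 1 -> 0 < a' \/ s' = 1 -> ring_pt s a = ring_pt s' a' -> s = s' /\ a = a'.
Proof.
move=> s_in s'_in a_le a'_le a_pos a'_pos E.
have := ring_ptP s_in a_le; have := ring_ptP s'_in a'_le; rewrite -E.
move: (ring_len_le s_in a_le) (ring_len_le s'_in a'_le) => {a_le a'_le E}.
case: (ring_pt s a) => x y; rewrite /on_ring /=.
by move=> a_le a'_le [h|[h|[h|h]]] [h'|[h'|[h'|h']]]; lia.
Qed.

Section RingAdjacency.
Variables (s a s' a' : nat) (P Q : nat * nat).
Hypotheses (s_ge1 : 1 <= s) (a_le : a + 16 * s + 4 <= 16 * k) (a'_le : a' + 16 * s' + 4 <= 16 * k).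
Hypotheses (onP : on_ring s a P) (onQ : on_ring s' a' Q) (adj : grid_adj P Q).

Lemma ring_adj_same : s = s' -> a' = a.+1 \/ a = a'.+1.
Proof.
move: onP onQ adj; case: P Q => x y [x' y']; rewrite /on_ring /grid_adj /=.
by move=> [h|[h|[h|h]]] [h'|[h'|[h'|h']]]; lia.
Qed.

Lemma ring_adj_next : s' = s.+1 -> 0 < a' -> a + 16 * s + 4 = 16 * k /\ a' = 1.
Proof.
move: onP onQ adj; case: P Q => x y [x' y']; rewrite /on_ring /grid_adj /=.
by move=> [h|[h|[h|h]]] [h'|[h'|[h'|h']]]; lia.
Qed.

Lemma ring_adj_far : s.+1 < s' -> False.
Proof.
move: onP onQ adj; case: P Q => x y [x' y']; rewrite /on_ring /grid_adj /=.
by move=> [h|[h|[h|h]]] [h'|[h'|[h'|h']]]; lia.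
Qed.
End RingAdjacency.

Lemma ring_pt_eq s a x y :
  1 <= s < k -> a <= ring_len s -> on_ring s a (x, y) -> ring_pt s a = (x, y).
Proof.
move=> s_in a_le; have := ring_ptP s_in a_le; have := ring_len_le s_in a_le.
by case: (ring_pt s a) => x' y'; rewrite /on_ring /= => a_le' h h'; congr (_, _); lia.
Qed.

Definition ring_edge s a := edge_triple k (ring_pt s a) (ring_pt s a.+1).

Lemma ring_edge_E1 s j : 1 <= s < k -> 2 * s - 1 <= j <= 4 * k - 2 - 2 * s ->
  ring_edge s (j - (2 * s - 1)) = edge3 (v k 1 (2 * s - 1)) (v k 2 j) (v k 2 j.+1).
Proof.
move=> s_in j_in; rewrite /ring_edge (@ring_pt_eq _ _ (2 * s - 1) j)
  ?(@ring_pt_eq _ _ (2 * s - 1) j.+1).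
- by rewrite edge_triple_vert.
all: rewrite /on_ring /ring_len /=; try (left; lia); lia.
Qed.

Lemma ring_edge_E2 s j : 1 <= s < k -> 2 * s - 1 <= j <= 4 * k - 2 - 2 * s ->
  ring_edge s (j + 4 * k + 1 - 6 * s) = edge3 (v k 1 j) (v k 1 j.+1) (v k 2 (4 * k - 1 - 2 * s)).
Proof.
move=> s_in j_in; rewrite /ring_edge (@ring_pt_eq _ _ j (4 * k - 1 - 2 * s))
  ?(@ring_pt_eq _ _ j.+1 (4 * k - 1 - 2 * s)).
- by rewrite edge_triple_horiz.
all: rewrite /on_ring /ring_len /=; try (right; left; lia); lia.
Qed.

Lemma ring_edge_E3 s j : 1 <= s < k -> 2 * s + 1 <= j <= 4 * k - 2 - 2 * s ->
  ring_edge s (12 * k - 10 * s - 2 - j) = edge3 (v k 1 (4 * k - 1 - 2 * s)) (v k 2 j) (v k 2 j.+1).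
Proof.
move=> s_in j_in; rewrite /ring_edge (@ring_pt_eq _ _ (4 * k - 1 - 2 * s) j.+1)
  ?(@ring_pt_eq _ _ (4 * k - 1 - 2 * s) j).
- by rewrite edge_triple_vert // set3C23.
all: rewrite /on_ring /ring_len /=; try (right; right; left; lia); lia.
Qed.

Lemma ring_edge_E4 s j : 1 <= s < k -> 2 * s + 1 <= j <= 4 * k - 2 - 2 * s ->
  ring_edge s (16 * k - 14 * s - 4 - j) = edge3 (v k 1 j) (v k 1 j.+1) (v k 2 (2 * s + 1)).
Proof.
move=> s_in j_in; rewrite /ring_edge (@ring_pt_eq _ _ j.+1 (2 * s + 1))
  ?(@ring_pt_eq _ _ j (2 * s + 1)).
- by rewrite edge_triple_horiz // set3C12.
all: rewrite /on_ring /ring_len /=; try (right; right; right; lia); lia.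
Qed.

Lemma psumS s : psum k s.+1 = psum k s + ring_len s.+1.
Proof. by rewrite /psum big_nat_recr. Qed.

Lemma psum_mono s t : s <= t -> psum k s <= psum k t.
Proof.
elim: t => [|t IH]; first by rewrite leqn0 => /eqP->.
by rewrite leq_eqVlt ltnS => /orP[/eqP->//|/IH le]; rewrite psumS (leq_trans le) ?leq_addr.
Qed.

Lemma psum_pred s : 0 < s -> psum k s = psum k s.-1 + ring_len s.
Proof. by case: s => // s _; rewrite psumS. Qed.

Lemma sidx_psum s a : 1 <= s < k -> 0 < a <= ring_len s -> sidx k (psum k s.-1 + a) = s.
Proof.
move=> s_in a_in; rewrite /sidx /itv /index_iota (@find_iota _ _ _ s.-1);
  [by rewrite prednK; lia | lia |].
move=> j j_lt; apply/idP/idP => [|le_j]; last first.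
  apply: (leq_trans _ (psum_mono (_ : s <= 1 + j))); last lia.
  by rewrite (psum_pred (s := s)) ?leq_add2l; lia.
apply: contraLR; rewrite -!ltnNge => lt_j.
apply: (@leq_trans (psum k s.-1).+1); last by rewrite -addn1 leq_add2l; lia.
by rewrite ltnS psum_mono //; lia.
Qed.

Definition spiral m : nat * nat :=
  if m == 0 then (1, 1) else ring_pt (sidx k m) (m - psum k (sidx k m).-1).

Lemma spiral_ring s a : 1 <= s < k -> a <= ring_len s -> spiral (psum k s.-1 + a) = ring_pt s a.
Proof.
have pos s' a' : 1 <= s' < k -> 0 < a' <= ring_len s' -> spiral (psum k s'.-1 + a') = ring_pt s' a'.
  move=> s'_in a'_in; rewrite /spiral sidx_psum // addKn.
  by case: eqP => // /eqP; rewrite addn_eq0; lia.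
move=> s_in a_le; have [a0|a_gt0] := posnP a; last by apply: pos; lia.
rewrite a0 addn0; have [s1|s_gt1] := leqP s 1.
  have -> : s = 1 by lia.
  by rewrite /spiral /psum big_geq // /ring_pt leq0n.
have s'_in : 1 <= s.-1 < k by lia.
have -> : ring_pt s 0 = ring_pt s.-1 (ring_len s.-1) by rewrite ring_pt_last ?prednK //; lia.
rewrite (psum_pred (s := s.-1)); last lia.
by apply: pos => //; rewrite /ring_len; lia.
Qed.

Lemma ring_index_decomp m : m <= T1 k ->
  exists s a, [/\ 1 <= s < k, a <= ring_len s, 0 < a \/ s = 1 & m = psum k s.-1 + a].
Proof.
rewrite /T1; have : k.-1 < k by lia.
elim: k.-1 m => [|t IH] m t_lt.
  rewrite /psum big_geq // leqn0 => /eqP->; exists 1, 0.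
  by split; [lia | exact: leq0n | right | rewrite /psum big_geq].
move=> m_le; have [le|gt] := leqP m (psum k t); first exact: IH (ltnW t_lt) le.
exists t.+1, (m - psum k t); move: m_le; rewrite psumS => m_le; split; try lia.
by rewrite /= subnKC // ltnW.
Qed.

Lemma spiral_box m : m <= T1 k -> in_box k (spiral m).
Proof.
by case/ring_index_decomp => s [a [s_in a_le _ ->]]; rewrite spiral_ring //; apply: ring_pt_box.
Qed.

Lemma spiral_inj m m' : m <= T1 k -> m' <= T1 k -> spiral m = spiral m' -> m = m'.
Proof.
case/ring_index_decomp => s [a [s_in a_le a_pos ->]].
case/ring_index_decomp => s' [a' [s'_in a'_le a'_pos ->]].
by rewrite !spiral_ring // => /ring_pt_inj[] // -> ->.
Qed.

Lemma spiral_succ m : m < T1 k -> exists s a,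
  [/\ 1 <= s < k, a < ring_len s, spiral m = ring_pt s a & spiral m.+1 = ring_pt s a.+1].
Proof.
case/ring_index_decomp => s [a [s_in a_le a_pos Em]].
have a_gt0 : 0 < a by case: a_pos => // s1; move: Em; rewrite s1 /psum big_geq //; lia.
exists s, a.-1; rewrite prednK // -(spiral_ring s_in a_le) -Em; split=> //.
by rewrite -spiral_ring //; [congr spiral; lia | lia].
Qed.

Lemma spiral_induced m m' : m <= T1 k -> m' <= T1 k ->
  grid_adj (spiral m) (spiral m') <-> m' = m.+1 \/ m = m'.+1.
Proof.
move=> mT m'T; split; last first.
  have succ i : i < T1 k -> grid_adj (spiral i) (spiral i.+1).
    by case/spiral_succ => s [a [s_in a_lt -> ->]]; apply: ring_pt_succ.
  by case=> ?; subst; [|apply: grid_adj_sym]; apply: succ; lia.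
move: mT m'T; case/ring_index_decomp => s [a [s_in a_le a_pos ->]].
case/ring_index_decomp => s' [a' [s'_in a'_le a'_pos ->]]; rewrite !spiral_ring // => adj.
have [onP onQ] := (ring_ptP s_in a_le, ring_ptP s'_in a'_le).
have [Ha Ha'] := (ring_len_le s_in a_le, ring_len_le s'_in a'_le).
have [s_ge1 s'_ge1] : 1 <= s /\ 1 <= s' by lia.
case: (ltngtP s s') => [lt|gt|eq].
- have [s'E|far] : s' = s.+1 \/ s.+1 < s' by lia.
    have [a_end a'1] := ring_adj_next s_ge1 Ha Ha' onP onQ adj s'E ltac:(lia).
    by left; rewrite s'E /= (psum_pred (s := s)) ?a'1 /ring_len //; lia.
  by case: (ring_adj_far s_ge1 Ha Ha' onP onQ adj far).
- have [sE|far] : s = s'.+1 \/ s'.+1 < s by lia.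
    have [a'_end a1] := ring_adj_next s'_ge1 Ha' Ha onQ onP (grid_adj_sym adj) sE ltac:(lia).
    by right; rewrite sE /= (psum_pred (s := s')) ?a1 /ring_len //; lia.
  by case: (ring_adj_far s'_ge1 Ha' Ha onQ onP (grid_adj_sym adj) far).
- by have := ring_adj_same s_ge1 Ha Ha' onP onQ adj eq; rewrite eq; lia.
Qed.

Lemma eseq_spiral m : eseq k m = point_triple k (spiral m).
Proof.
rewrite /eseq /spiral /point_triple; case: eqP => // _ /=; rewrite /ring_pt.
by case: ifP => _ //; case: ifP => _ //; case: ifP.
Qed.

Lemma mem_Ecal f :
  f \in Ecal k <-> exists s a, [/\ 1 <= s < k, a < ring_len s & f = ring_edge s a].
Proof.
split.
  case/bigcup_seqP => s; rewrite mem_index_iota => s_in.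
  rewrite /E1 /E2 /E3 /E4 !inE -!orbA => /or4P[] /mapP[j]; rewrite mem_index_iota => j_in ->.
  - exists s, (j - (2 * s - 1)).
    by split=> //; [rewrite /ring_len | rewrite ring_edge_E1 //]; lia.
  - exists s, (j + 4 * k + 1 - 6 * s).
    by split=> //; [rewrite /ring_len | rewrite ring_edge_E2 //]; lia.
  - exists s, (12 * k - 10 * s - 2 - j).
    by split=> //; [rewrite /ring_len | rewrite ring_edge_E3 //]; lia.
  - exists s, (16 * k - 14 * s - 4 - j).
    by split=> //; [rewrite /ring_len | rewrite ring_edge_E4 //]; lia.
case=> s [a [s_in a_lt ->]]; apply/bigcup_seqP; exists s; first by rewrite mem_index_iota.
rewrite /E1 /E2 /E3 /E4 !inE -!orbA; move: a_lt; rewrite /ring_len => a_lt.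
have [h1|h1] := ltnP a (4 * (k - s)).
  apply/or4P; constructor 1; apply/mapP; exists (2 * s - 1 + a).
    by rewrite mem_index_iota; lia.
  by rewrite -ring_edge_E1 ?addKn //; lia.
have [h2|h2] := ltnP a (8 * (k - s)).
  apply/or4P; constructor 2; apply/mapP; exists (6 * s + a - 4 * k - 1).
    by rewrite mem_index_iota; lia.
  by rewrite -ring_edge_E2; [congr ring_edge | |]; lia.
have [h3|h3] := ltnP a (12 * (k - s) - 2).
  apply/or4P; constructor 3; apply/mapP; exists (12 * k - 10 * s - 2 - a).
    by rewrite mem_index_iota; lia.
  by rewrite -ring_edge_E3; [congr ring_edge | |]; lia.
apply/or4P; constructor 4; apply/mapP; exists (16 * k - 14 * s - 4 - a).
  by rewrite mem_index_iota; lia.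
by rewrite -ring_edge_E4; [congr ring_edge | |]; lia.
Qed.

Lemma Ecal_spiral : Ecal k = path_triples k spiral (T1 k).
Proof.
apply/setP => f; rewrite inE; apply/idP/mapP.
  case/mem_Ecal => s [a [s_in a_lt ->]]; exists (psum k s.-1 + a).
    have := psum_mono (_ : s <= k.-1); rewrite mem_iota (psum_pred (s := s)) /T1; lia.
  by rewrite /ring_edge -addnS !spiral_ring //; lia.
case=> m; rewrite mem_iota => m_lt ->; apply/mem_Ecal.
have [s [a [s_in a_lt Em Em1]]] := spiral_succ m_lt.
by exists s, a; rewrite /ring_edge Em Em1.
Qed.
End Spiral.

Theorem lemma3p2 (k : nat) : 2 <= k -> sequential (Vset k) (H1 k) (eseq k) (T1 k).
Proof.
move=> k_ge2; apply: (eq_sequential (fun m => esym (eseq_spiral k m))).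
have := path_sequential (spiral_box k_ge2) (spiral_inj k_ge2) (spiral_induced k_ge2).
by rewrite -Ecal_spiral.
Qed.
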